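(* Let $0\le r\le n$, let $A\in\mathcal{A}_{n+1,r+1}$ have block-ends $b_1>\dots>b_{r+1}$, and fix a tiling of $\Gamma(X(A))$. At the termination of the fusion-exchange algorithm applied to $A$, the union of the labels of the horizontal edges of the northwest boundary is $\{b_1+1,\dots,n+1\}$, the union of the labels of the vertical edges of the northwest boundary is $\{1,\dots,b_{r+1}-1\}$, and the union of the labels of the diagonal edges of the northwest boundary is $\{b_{r+1}+1,\dots,b_1\}$.
   Context: Words and diagrams. For $0\le r\le n$ let $B_n^r$ be the set of words $X\in\{H,L,0\}^n$ with exactly $r$ letters $L$. If $X$ has $k$ letters $H$, $r$ letters $L$ and $\ell$ letters $0$, its rhombic diagram $\Gamma(X)$ is the closed region bounded by two paths of unit steps, using the directions west (horizontal), south (vertical) and southwest (diagonal: a fixed unit vector strictly between west and south), both going from a point $P$ to a point $Q$: the northwest boundary consists of $\ell$ west steps, then $r$ southwest steps, then $k$ south steps; the southeast boundary is obtained by reading $X$ left to right and taking a west step for each $0$, a southwest step for each $L$, a south step for each $H$. A tiling of $\Gamma(X)$ is a tiling by unit rhombi of three kinds: squares (horizontal and vertical edges), tall rhombi (vertical and diagonal edges), short rhombi (horizontal and diagonal edges). Each tile has two edges on its lower-right side: its east edge (vertical for squares and tall rhombi, diagonal for short rhombi) and its south edge (horizontal for squares and short rhombi, diagonal for tall rhombi); the parallel edges on its upper-left side are its west and north edges. Assemblées. An assemblée of size $(m,s)$ is a collection of $s$ nonempty, pairwise disjoint, linearly ordered sets (blocks) with union $\{1,\dots,m\}$; the last element of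 a block is its block-end. Blocks are listed in the canonical order with decreasing block-ends, and the assemblée is identified with the concatenated word. $\mathcal{A}_{m,s}$ is the set of these. For $A\in\mathcal{A}_{n+1,r+1}$ with block-ends $b_1>\dots>b_{r+1}$, a non-block-end element $x$ is an increase if $x+1$ appears to the right of $x$ in $A$, and a decrease otherwise (so $n+1$, if not a block-end, is a decrease). $X(A)\in B_n^r$ is obtained from $A$ by deleting its last letter $b_{r+1}$ and replacing each increase by $H$, each decrease by $0$ and each remaining block-end by $L$. Fusion-exchange algorithm. A label is a finite, possibly empty, set of consecutive integers; for labels $E,S$ write $E\succ S$ if both are nonempty and $\min E=\max S+1$. Given $A\in\mathcal{A}_{n+1,r+1}$ and a tiling of $\Gamma(X(A))$: initially the southeast boundary edges, in order from $P$ to $Q$, receive the singleton labels of the letters of $A$ from left to right, $b_{r+1}$ omitted. Step: choose a tile whose east and south edges are labeled, say by $E$ and $S$, and whose west and north edges are not. (R I) If $E\succ S$ and the south edge is horizontal: west edge gets $E\cup S$, north edge gets $\emptyset$, place $\alpha$ in the tile. (R II) If $S\succ E$ and the east edge is vertical: north edge gets $E\cup S$, west edge gets $\emptyset$, place $\beta$. (R III) Otherwise: west edge gets $E$, north edge gets $S$, and place $q$ if $E\ne\emptyset$ and $S\ne\emptyset$. Repeat until every edge is labeled (termination). *)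

From HB Require Import structures.
From mathcomp Require Import all_boot.
Set Implicit Arguments. Unset Strict Implicit. Unset Printing Implicit Defensive.

(* An assemblée of size (m,s): a list of s nonempty blocks (linearly ordered
   sets, i.e. duplicate-free sequences), pairwise disjoint, with union
   {1,...,m}, listed in canonical order: decreasing block-ends (last elements). *)
Definition block_end (b : seq nat) : nat := last 0 b.

Definition assemblee (m s : nat) (B : seq (seq nat)) : Prop :=
  [/\ size B = s,
      all (fun b => size b > 0) B,
      perm_eq (flatten B) (iota 1 m)
    & sorted (fun x y => y < x) (map block_end B)].

(* the assemblée identified with its concatenated word *)
Definition asm_word (B : seq (seq nat)) : seq nat := flatten B.
Definition asm_ends (B : seq (seq nat)) : seq nat := map block_end B.
Definition b_first (B : seq (seq nat)) : nat := head 0 (asm_ends B).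
Definition b_last (B : seq (seq nat)) : nat := last 0 (asm_ends B).

Definition is_increase (B : seq (seq nat)) (x : nat) : bool :=
  (x \notin asm_ends B) &&
  (x.+1 \in drop (index x (asm_word B)).+1 (asm_word B)).

Inductive letter := LetH | LetL | Let0.

Definition letter_of (B : seq (seq nat)) (x : nat) : letter :=
  if x \in asm_ends B then LetL
  else if is_increase B x then LetH else Let0.

(* the letters of A with the last letter b_{r+1} deleted *)
Definition asm_word_trunc (B : seq (seq nat)) : seq nat :=
  take (size (asm_word B)).-1 (asm_word B).

Definition X_of (B : seq (seq nat)) : seq letter :=
  map (letter_of B) (asm_word_trunc B).

Inductive dir := DirW (* horizontal *) | DirSW (* diagonal *) | DirS (* vertical *).

Definition dir_rank (d : dir) : nat :=
  match d with DirW => 0 | DirSW => 1 | DirS => 2 end.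

Definition dir_eqb (d1 d2 : dir) : bool := dir_rank d1 == dir_rank d2.
Lemma dir_eqP : Equality.axiom dir_eqb.
Proof. by case; case; constructor. Qed.
HB.instance Definition _ := hasDecEq.Build dir dir_eqP.

(* southeast-boundary step for each letter: 0 -> west, L -> southwest, H -> south *)
Definition dir_of_letter (c : letter) : dir :=
  match c with Let0 => DirW | LetL => DirSW | LetH => DirS end.

(* A label is a finite, possibly empty, set of consecutive integers:
   None = empty, Some (a, b) = {a, a+1, ..., b} (with a <= b). *)
Definition label := option (nat * nat).

Definition lab_mem (x : nat) (E : label) : bool :=
  if E is Some (a, b) then (a <= x) && (x <= b) else false.

Definition lab_succ (E S : label) : bool :=
  match E, S with
  | Some (a, _), Some (_, d) => a == d.+1
  | _, _ => false
  end.

(* union of two labels, used when one immediately follows the other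
   (then it is again a set of consecutive integers) *)
Definition lab_union (E S : label) : label :=
  match E, S with
  | Some (a, b), Some (c, d) => Some (minn a c, maxn b d)
  | Some _, None => E
  | None, _ => S
  end.

(* A state is the current frontier of labeled edges: the path of labeled edges
   from P to Q, each edge given by its direction and its label.  Processing a
   tile whose east edge (direction dE, label E) is followed along the path by
   its south edge (direction dS, label S) replaces these two edges by the
   north edge (direction dS) followed by the west edge (direction dE).
   fe_rule returns (west label, north label). *)
Definition fe_rule (dE : dir) (E : label) (dS : dir) (S : label) : label * label :=
  if lab_succ E S && (dS == DirW) then (lab_union E S, None)
  else if lab_succ S E && (dE == DirS) then (None, lab_union E S)
  else (E, S).

Definition fe_state := seq (dir * label).

(* The three tile kinds correspond exactly to the adjacent pairs
   (S,W) square, (S,SW) tall rhombus, (SW,W) short rhombus, i.e. to the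
   pairs with dir_rank dS < dir_rank dE. *)
Inductive fe_step : fe_state -> fe_state -> Prop :=
  | FeStep (p1 p2 : fe_state) (dE dS : dir) (E S : label) :
      dir_rank dS < dir_rank dE ->
      fe_step (p1 ++ (dE, E) :: (dS, S) :: p2)
              (p1 ++ (dS, (fe_rule dE E dS S).2) :: (dE, (fe_rule dE E dS S).1) :: p2).

Inductive fe_run : fe_state -> fe_state -> Prop :=
  | FeRefl p : fe_run p p
  | FeTrans p q s : fe_step p q -> fe_run q s -> fe_run p s.

Definition fe_terminal (p : fe_state) : Prop := forall q, ~ fe_step p q.

(* initial labeling of the southeast boundary of Gamma(X(A)) *)
Definition fe_init (B : seq (seq nat)) : fe_state :=
  map (fun x => (dir_of_letter (letter_of B x), Some (x, x))) (asm_word_trunc B).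

Definition in_labels (d : dir) (p : fe_state) (x : nat) : bool :=
  has (fun e => (e.1 == d) && lab_mem x e.2) p.

From HB Require Import structures.
From mathcomp Require Import all_boot zify.
Set Implicit Arguments. Unset Strict Implicit. Unset Printing Implicit Defensive.

(* The labels of the frontier always partition {1, ..., n+1} minus b_{r+1}, and a value x
   obeys a constraint depending on the direction of its edge: on a diagonal edge
   b_{r+1} < x <= b_1; on a horizontal edge x <> b_1 and x+1, if at most n+1, lies on the
   same edge or on one nearer to P; on a vertical edge x <> b_1, x <= n, and x+1 is b_{r+1}
   or lies on the same edge or on one nearer to Q.  For the initial labeling these are the
   definitions of block-ends, decreases and increases.  Exchanging two labels (R III) can only
   break a constraint when one label is the interval immediately following the other, and in
   exactly those cases R I or R II fuses them instead.  At termination no tile is left, so the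
   northwest boundary reads horizontal, then diagonal, then vertical edges.  The horizontal
   values are then closed under successor below n+1 and avoid b_1, hence exceed b_1; the
   vertical values are closed under successor up to b_{r+1} and stay below n+1, hence lie
   below b_{r+1}. *)

Lemma cat_cons2_eq_cat_cons (T : Type) (p1 p2 q1 q2 : seq T) a b e :
  p1 ++ a :: b :: p2 = q1 ++ e :: q2 ->
  [\/ exists2 r, p1 = q1 ++ e :: r & q2 = r ++ a :: b :: p2,
      [/\ q1 = p1, e = a & q2 = b :: p2],
      [/\ q1 = rcons p1 a, e = b & q2 = p2]
    | exists2 r, q1 = p1 ++ a :: b :: r & p2 = r ++ e :: q2].
Proof.
elim: q1 p1 => [|f q1 IH] [|g p1] /=.
- by case=> -> <-; apply: Or42.
- by case=> -> <-; apply: Or41; exists p1.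
- case=> ->; case: q1 {IH} => [|h q1] /= [-> ->]; first exact: Or43.
  by apply: Or44; exists q1.
- case=> -> /IH[[r -> ->]|[-> -> ->]|[-> -> ->]|[r -> ->]].
  + by apply: Or41; exists r.
  + exact: Or42.
  + exact: Or43.
  + by apply: Or44; exists r.
Qed.

Lemma map_eq_cat_cons (A B : Type) (f : A -> B) s p1 y p2 :
  map f s = p1 ++ y :: p2 ->
  exists t1 x t2, [/\ s = t1 ++ x :: t2, p1 = map f t1, y = f x & p2 = map f t2].
Proof.
elim: p1 s => [|z p1 IH] [|x s] //= [ex es].
- by exists [::], x, s.
- have [t1 [x' [t2 [-> -> -> ->]]]] := IH s es.
  by exists (x :: t1), x', t2; rewrite -ex.
Qed.

Lemma sorted_adjacent (T : Type) (r : rel T) s :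
  (forall s1 x y s2, s = s1 ++ x :: y :: s2 -> r x y) -> sorted r s.
Proof.
elim: s => // x [|y s] IH adj //=.
rewrite (adj [::] x y s) //=; apply: IH => s1 a b s2 ys.
by apply: (adj (x :: s1)); rewrite ys.
Qed.

Lemma sorted_cat_cons_all (T : Type) (r : rel T) s1 x s2 : transitive r ->
  sorted r (s1 ++ x :: s2) -> all (r^~ x) s1 && all (r x) s2.
Proof.
move=> tr; rewrite sorted_pairwise // pairwise_cat pairwise_cons allrel_consr.
by case/and3P=> /andP[-> _] _ /andP[-> _].
Qed.

Lemma drop_index_cat_cons (T : eqType) (s1 s2 : seq T) x : x \notin s1 ->
  drop (index x (s1 ++ x :: s2)).+1 (s1 ++ x :: s2) = s2.
Proof.
move=> xs1; rewrite index_cat (negbTE xs1) /= eqxx addn0 drop_cat ltnNge leqnSn.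
by rewrite subSnn drop1.
Qed.

Lemma last_flatten (T : Type) (x0 : T) (B : seq (seq T)) :
  all (fun b => 0 < size b) B -> last x0 (flatten B) = last x0 (map (last x0) B).
Proof.
case/lastP: B => // B b; rewrite all_rcons => /andP[nb _].
rewrite -cats1 flatten_cat map_cat !last_cat /=.
by case: b nb.
Qed.

Lemma sorted_gtn_bounds (s : seq nat) x : sorted (fun a b => b < a) s -> x \in s ->
  last 0 s <= x <= head 0 s.
Proof.
have tr : transitive (fun a b : nat => b < a) by move=> a b c ba cb; apply: ltn_trans cb ba.
move=> srt xs; apply/andP; split.
- move: srt xs; case/lastP: s => // s l.
  rewrite last_rcons sorted_pairwise // pairwise_rcons mem_rcons inE.
  by case/andP=> /allP sl _ /orP[/eqP -> // | /sl /ltnW].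
- move: srt xs; case: s => // h s.
  rewrite /= path_sortedE // inE.
  by case/andP=> /allP sh _ /orP[/eqP -> // | /sh /ltnW].
Qed.

Lemma succ_closed_absent (P : nat -> Prop) m :
  (forall x, x < m -> P x -> P x.+1) -> ~ P m -> forall x, x <= m -> ~ P x.
Proof.
move=> closed notPm x /subnK; move: (m - x) => k.
elim: k x => [|k IH] x mE Px; first by apply: notPm; rewrite -mE add0n.
apply: (IH x.+1); first by rewrite -addSnnS.
by apply: closed Px; rewrite -mE addSn ltnS leq_addl.
Qed.

Definition lab_seq (l : label) : seq nat :=
  if l is Some (a, b) then iota a (b.+1 - a) else [::].

(* [Some (a, b)] with [b < a] also denotes the empty label, but [lab_union] mishandles it;
   the invariant below keeps such labels off the frontier. *)
Definition lab_wf (l : label) : bool := if l is Some (a, b) then a <= b else true.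

Lemma mem_lab_seq x l : (x \in lab_seq l) = lab_mem x l.
Proof. by case: l => [[a b]|] //=; rewrite mem_iota; apply/idP/idP; lia. Qed.

Lemma lab_unionC : commutative lab_union.
Proof. by case=> [[a b]|] [[c d]|] //=; rewrite minnC maxnC. Qed.

Lemma lab_seq_union hi lo : lab_wf hi -> lab_wf lo -> lab_succ hi lo ->
  lab_seq (lab_union hi lo) = lab_seq lo ++ lab_seq hi.
Proof.
case: hi lo => [[a b]|] [[c d]|] //= ab cd /eqP ea; subst a.
rewrite (minn_idPr _) ?(maxn_idPl _); try lia.
have -> : b.+1 - c = d.+1 - c + (b.+1 - d.+1) by lia.
by rewrite iotaD subnKC // ltnW.
Qed.

Lemma lab_wf_union hi lo : lab_wf hi -> lab_wf lo -> lab_succ hi lo ->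
  lab_wf (lab_union hi lo).
Proof. by case: hi lo => [[a b]|] [[c d]|] //= ab cd /eqP ea; lia. Qed.

Lemma lab_succ_next hi lo x : lab_wf hi -> lab_succ hi lo ->
  x \in lab_seq lo -> x.+1 \in lab_seq lo ++ lab_seq hi.
Proof.
case: hi lo => [[a b]|] [[c d]|] //= ab /eqP ea; rewrite mem_cat !mem_iota.
lia.
Qed.

Lemma lab_succ_lt hi lo x : lab_wf hi -> lab_succ hi lo ->
  x \in lab_seq lo -> exists2 y, y \in lab_seq hi & x < y.
Proof.
case: hi lo => [[a b]|] [[c d]|] //= ab /eqP ea; rewrite mem_iota => hx.
by exists a; rewrite ?mem_iota; lia.
Qed.

Lemma lab_succ_range hi lo z m : lab_wf hi -> lab_succ hi lo -> z \notin lab_seq lo ->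
  (forall y, y \in lab_seq hi -> z < y <= m) -> forall x, x \in lab_seq lo -> z < x <= m.
Proof.
case: hi lo => [[a b]|] [[c d]|] //= ab /eqP ea; rewrite mem_iota => hz hhi x.
have := hhi a; rewrite !mem_iota; lia.
Qed.

Lemma lab_succ_of_next hi lo x : uniq (lab_seq lo ++ lab_seq hi) ->
  x \in lab_seq lo -> x.+1 \in lab_seq hi -> lab_succ hi lo.
Proof.
case: hi lo => [[a b]|] [[c d]|] //=; rewrite cat_uniq !mem_iota => /and3P[_ /hasPn disj _] hx hx1.
apply/eqP; have := disj (maxn a c); rewrite !mem_iota; lia.
Qed.

Definition state_vals (p : fe_state) : seq nat := flatten [seq lab_seq e.2 | e <- p].

Lemma state_vals_cons e p : state_vals (e :: p) = lab_seq e.2 ++ state_vals p.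
Proof. by []. Qed.

Lemma state_vals_cat p1 p2 : state_vals (p1 ++ p2) = state_vals p1 ++ state_vals p2.
Proof. by rewrite /state_vals map_cat flatten_cat. Qed.

Lemma state_vals_rcons p e : state_vals (rcons p e) = state_vals p ++ lab_seq e.2.
Proof. by rewrite -cats1 state_vals_cat /state_vals /= cats0. Qed.

Lemma state_valsP x p :
  reflect (exists2 e, e \in p & x \in lab_seq e.2) (x \in state_vals p).
Proof.
apply: (iffP flattenP) => [[_ /mapP[e ep ->]] | [e ep xe]]; first by exists e.
by exists (lab_seq e.2); first exact: map_f.
Qed.

Lemma in_labelsP d p x :
  reflect (exists2 e, e \in p & (e.1 = d) /\ (x \in lab_seq e.2)) (in_labels d p x).
Proof.
apply: (iffP hasP) => [[e ep /andP[/eqP ed xe]] | [e ep [ed xe]]]; exists e => //.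
  by rewrite mem_lab_seq.
by rewrite ed eqxx -mem_lab_seq.
Qed.

Variant fe_rule_spec dE E dS S : label -> label -> Prop :=
  | FuseWest of lab_succ E S & dS = DirW :
      fe_rule_spec dE E dS S (lab_union E S) None
  | FuseNorth of lab_succ S E & dE = DirS :
      fe_rule_spec dE E dS S None (lab_union E S)
  | Exchange of ~~ (lab_succ E S && (dS == DirW)) & ~~ (lab_succ S E && (dE == DirS)) :
      fe_rule_spec dE E dS S E S.

Lemma fe_ruleP dE E dS S :
  fe_rule_spec dE E dS S (fe_rule dE E dS S).1 (fe_rule dE E dS S).2.
Proof.
rewrite /fe_rule; case: ifP => [/andP[ES /eqP ->] | noI]; first exact: FuseWest.
case: ifP => [/andP[SE /eqP ->] | noII]; first exact: FuseNorth.
by apply: Exchange; rewrite ?noI ?noII.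
Qed.

Section Invariant.

Variables N bl b1 : nat.

Definition edge_ok (pre post : seq nat) (e : dir * label) : Prop :=
  forall x, x \in lab_seq e.2 ->
  match e.1 with
  | DirW => x != b1 /\ (x < N -> x.+1 \in pre ++ lab_seq e.2)
  | DirSW => bl < x <= b1
  | DirS => [/\ x != b1, x < N & (x.+1 == bl) || (x.+1 \in lab_seq e.2 ++ post)]
  end.

Lemma edge_ok_sub pre pre' post post' e :
  {subset pre <= pre'} -> {subset post <= post'} ->
  edge_ok pre post e -> edge_ok pre' post' e.
Proof.
move=> spre spost ok x /ok; case: e.1 => //.
- case=> -> next; split=> // /next; rewrite !mem_cat.
  by case/orP=> [/spre -> | ->]; rewrite ?orbT.
- case=> -> -> next; split=> //; move: next; rewrite !mem_cat.
  by case/or3P=> [-> | -> | /spost ->]; rewrite ?orbT.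
Qed.

Lemma edge_ok_exchange pre post dE E dS S :
  dir_rank dS < dir_rank dE -> uniq (lab_seq E ++ lab_seq S) ->
  ~~ (lab_succ E S && (dS == DirW)) -> ~~ (lab_succ S E && (dE == DirS)) ->
  edge_ok pre (lab_seq S ++ post) (dE, E) -> edge_ok (pre ++ lab_seq E) post (dS, S) ->
  edge_ok pre (lab_seq E ++ post) (dS, S) /\ edge_ok (pre ++ lab_seq S) post (dE, E).
Proof.
move=> rank_lt uES noI noII okE okS; split=> x /= xl.
- move: (okS x xl); case: dS rank_lt noI {okS} => //= rank_lt noI; last first.
    by case: dE rank_lt noII okE.
  rewrite andbT in noI; case=> -> next; split=> // /next; rewrite -catA !mem_cat.
  case/or3P=> [-> | x1E | ->] //; rewrite ?orbT //.
  have uSE : uniq (lab_seq S ++ lab_seq E) by rewrite uniq_catC.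
  by rewrite (lab_succ_of_next uSE xl x1E) in noI.
- move: (okE x xl); case: dE rank_lt noII {okE} => //= _ noII.
  rewrite andbT in noII; case=> -> -> next; split=> //; move: next; rewrite !mem_cat.
  case/or4P=> [-> | -> | x1S | ->] //; rewrite ?orbT //.
  by rewrite (lab_succ_of_next uES xl x1S) in noII.
Qed.

Lemma edge_ok_fuse_west pre post dE E S :
  0 < dir_rank dE -> lab_wf E -> lab_wf S -> lab_succ E S -> bl \notin lab_seq S ->
  edge_ok pre (lab_seq S ++ post) (dE, E) -> edge_ok (pre ++ lab_seq E) post (DirW, S) ->
  edge_ok pre post (dE, lab_union E S).
Proof.
move=> rank_pos wfE wfS ES blS okE okS x /=; rewrite lab_seq_union // mem_cat.
case: dE rank_pos okE => //= _ okE.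
- by case/orP=> [|/okE //]; apply: lab_succ_range wfE ES blS okE x.
- case/orP=> [xS | xE].
    have [y yE xy] := lab_succ_lt wfE ES xS.
    have [_ yN _] := okE y yE; have [xb1 _] := okS x xS.
    split=> //; first exact: ltn_trans xy yN.
    by rewrite mem_cat (lab_succ_next wfE ES xS) orbT.
  have [-> -> next] := okE x xE; split=> //; move: next; rewrite !mem_cat.
  by case/or4P=> [-> | -> | -> | ->]; rewrite ?orbT.
Qed.

Lemma edge_ok_fuse_north pre post E dS S :
  dir_rank dS < 2 -> lab_wf E -> lab_wf S -> lab_succ S E -> bl \notin lab_seq E ->
  edge_ok pre (lab_seq S ++ post) (DirS, E) -> edge_ok (pre ++ lab_seq E) post (dS, S) ->
  edge_ok pre post (dS, lab_union E S).
Proof.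
move=> rank_lt wfE wfS SE blE okE okS x /=; rewrite lab_unionC lab_seq_union // mem_cat.
case: dS rank_lt okS => //= _ okS.
- case/orP=> [xE | xS].
    have [-> xN _] := okE x xE; split=> // _.
    by rewrite mem_cat (lab_succ_next wfS SE xE) orbT.
  by have [-> next] := okS x xS; split=> // /next; rewrite catA.
- by case/orP=> [|/okS //]; apply: lab_succ_range wfS SE blE okS x.
Qed.

Lemma fe_rule_ok pre post dE E dS S E' S' :
  dir_rank dS < dir_rank dE -> lab_wf E -> lab_wf S ->
  uniq (lab_seq E ++ lab_seq S) -> bl \notin lab_seq E ++ lab_seq S ->
  edge_ok pre (lab_seq S ++ post) (dE, E) -> edge_ok (pre ++ lab_seq E) post (dS, S) ->
  fe_rule_spec dE E dS S E' S' ->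
  [/\ lab_wf E' && lab_wf S', perm_eq (lab_seq S' ++ lab_seq E') (lab_seq E ++ lab_seq S),
      edge_ok pre (lab_seq E' ++ post) (dS, S') & edge_ok (pre ++ lab_seq S') post (dE, E')].
Proof.
move=> rank_lt wfE wfS uES; rewrite mem_cat negb_or => /andP[blE blS] okE okS.
case=> [ES dSW | SE dES | noI noII].
- subst dS; split=> /=; first by rewrite lab_wf_union.
  + by rewrite lab_seq_union // perm_catC.
  + by [].
  + by rewrite cats0; apply: edge_ok_fuse_west.
- subst dE; split=> /=; first by rewrite lab_unionC lab_wf_union.
  + by rewrite cats0 lab_unionC lab_seq_union.
  + exact: edge_ok_fuse_north.
  + by [].
- have [okS' okE'] := edge_ok_exchange rank_lt uES noI noII okE okS.
  by split; [rewrite wfE wfS | rewrite perm_catC | |].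
Qed.

Record fe_inv (p : fe_state) : Prop := FeInv {
  fe_inv_wf : all (fun e => lab_wf e.2) p;
  fe_inv_vals : perm_eq (state_vals p) [seq x <- iota 1 N | x != bl];
  fe_inv_edges : forall p1 e p2, p = p1 ++ e :: p2 ->
    edge_ok (state_vals p1) (state_vals p2) e }.

Lemma fe_inv_mem p x : fe_inv p -> (x \in state_vals p) = (0 < x <= N) && (x != bl).
Proof.
by case=> _ /perm_mem -> _; rewrite mem_filter mem_iota andbC; congr (_ && _); lia.
Qed.

Lemma fe_inv_step p q : fe_step p q -> fe_inv p -> fe_inv q.
Proof.
case=> p1 p2 dE dS E S rank_lt inv; case: (inv) => wf vals edges.
move: (fe_rule dE E dS S).1 (fe_rule dE E dS S).2 (fe_ruleP dE E dS S) => E' S' spec.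
have /and4P[wf1 wfE wfS wf2] : [&& all (fun e => lab_wf e.2) p1, lab_wf E, lab_wf S
    & all (fun e => lab_wf e.2) p2] by move: wf; rewrite all_cat.
have uES : uniq (lab_seq E ++ lab_seq S).
  have : uniq (state_vals (p1 ++ (dE, E) :: (dS, S) :: p2)).
    by rewrite (perm_uniq vals); apply/filter_uniq/iota_uniq.
  rewrite state_vals_cat !state_vals_cons /= cat_uniq => /and3P[_ _].
  by rewrite catA cat_uniq => /and3P[].
have blES : bl \notin lab_seq E ++ lab_seq S.
  have := fe_inv_mem bl inv; rewrite eqxx andbF state_vals_cat !state_vals_cons /=.
  by move/negbT; apply: contra; rewrite !mem_cat => /orP[] ->; rewrite ?orbT.
have okE := edges p1 (dE, E) ((dS, S) :: p2) erefl.
have := edges (rcons p1 (dE, E)) (dS, S) p2.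
rewrite cat_rcons state_vals_rcons => /(_ erefl) okS.
have [wfES' permES' okS' okE'] := fe_rule_ok rank_lt wfE wfS uES blES okE okS spec.
have swap s1 s2 : perm_eq (state_vals (s1 ++ (dS, S') :: (dE, E') :: s2))
                          (state_vals (s1 ++ (dE, E) :: (dS, S) :: s2)).
  by rewrite !state_vals_cat !state_vals_cons perm_cat2l !catA perm_cat2r.
split.
- by move: wfES'; rewrite all_cat /= wf1 wf2 andbT => /andP[-> ->].
- exact: perm_trans (swap p1 p2) vals.
move=> q1 e q2 qE.
case: (cat_cons2_eq_cat_cons qE) => [[r p1E ->] | [-> -> ->] | [-> -> ->] | [r -> p2E]].
- apply: edge_ok_sub (edges q1 e (r ++ (dE, E) :: (dS, S) :: p2) _) => //.
    by move=> x; rewrite (perm_mem (swap r p2)).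
  by rewrite p1E -catA.
- exact: okS'.
- by rewrite state_vals_rcons.
- apply: edge_ok_sub (edges (p1 ++ (dE, E) :: (dS, S) :: r) e q2 _) => //.
    by move=> x; rewrite (perm_mem (swap p1 r)).
  by rewrite p2E -catA.
Qed.

Lemma fe_inv_run p q : fe_run p q -> fe_inv p -> fe_inv q.
Proof. by elim=> // {}p {}q s st _ IH /(fe_inv_step st). Qed.

End Invariant.

Section Assemblee.

Variables (m s : nat) (B : seq (seq nat)).
Hypothesis asmB : assemblee m s B.

Lemma assemblee_mem_word x : (x \in asm_word B) = (0 < x <= m).
Proof. by case: asmB => _ _ /perm_mem -> _; rewrite mem_iota add1n ltnS. Qed.

Lemma assemblee_uniq_word : uniq (asm_word B).
Proof. by case: asmB => _ _ /perm_uniq -> _; apply: iota_uniq. Qed.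

Lemma assemblee_ends_word : {subset asm_ends B <= asm_word B}.
Proof.
case: asmB => _ /allP nonempty _ _ _ /mapP[b bB ->]; apply/flattenP; exists b => //.
by case: b bB (nonempty b bB) => // z b _ _; apply: mem_last.
Qed.

Lemma assemblee_ends_bounds e : e \in asm_ends B -> b_last B <= e <= b_first B.
Proof. by case: asmB => _ _ _; apply: sorted_gtn_bounds. Qed.

Lemma assemblee_word_rcons : 0 < m ->
  asm_word B = rcons (asm_word_trunc B) (b_last B).
Proof.
case: asmB => _ nonempty /perm_size; rewrite size_iota => size_w _ m_pos.
have lastE : last 0 (asm_word B) = b_last B by apply: last_flatten.
rewrite /asm_word_trunc -lastE /asm_word; move: m_pos; rewrite -size_w.
case/lastP: (flatten B) => [|w x _] //.
by rewrite last_rcons size_rcons -cats1 take_size_cat // cats1.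
Qed.

End Assemblee.

Lemma assemblee_b_first m s B : assemblee m s.+1 B -> b_first B \in asm_ends B.
Proof.
case=> size_B _ _ _; have : size (asm_ends B) = s.+1 by rewrite size_map.
by rewrite /b_first; case: (asm_ends B) => // e ends _; apply: mem_head.
Qed.

Lemma state_vals_singletons (f : nat -> dir) t :
  state_vals [seq (f x, Some (x, x)) | x <- t] = t.
Proof.
rewrite -[RHS]flatten_seq1 /state_vals -map_comp; congr flatten.
by apply: eq_map => x /=; rewrite subSnn.
Qed.

Lemma fe_inv_init n r B : assemblee n.+1 r.+1 B ->
  fe_inv n.+1 (b_last B) (b_first B) (fe_init B).
Proof.
move=> asmB; have wE := assemblee_word_rcons asmB (ltn0Sn n).
have := assemblee_uniq_word asmB; rewrite wE rcons_uniq => /andP[bl_t ut].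
have b1_end := assemblee_b_first asmB.
split.
- by rewrite all_map; apply/allP => x _ /=.
- rewrite state_vals_singletons; apply: uniq_perm => //; first exact/filter_uniq/iota_uniq.
  move=> x; rewrite mem_filter mem_iota add1n ltnS -(assemblee_mem_word asmB) wE mem_rcons inE.
  by case: eqVneq => [-> | _] //=; apply/negbTE.
move=> p1 e p2 /= pE y; have [t1 [x [t2 [tE -> -> ->]]]] := map_eq_cat_cons pE.
rewrite !state_vals_singletons /= subSnn inE => /eqP -> {y}.
have wE' : asm_word B = t1 ++ x :: t2 ++ [:: b_last B] by rewrite wE tE -cats1 -catA.
have x_bl : x != b_last B by apply: contraNneq bl_t => <-; rewrite tE mem_cat mem_head orbT.
rewrite /letter_of; case: ifP => [x_end | x_end] /=.
  by case/andP: (assemblee_ends_bounds asmB x_end) => blx ->; rewrite andbT ltn_neqAle eq_sym x_bl.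
have x_b1 : x != b_first B by apply: contraFneq x_end => ->.
have x_t1 : x \notin t1 by move: ut; rewrite tE cat_uniq /= => /and3P[_ /norP[]].
rewrite /is_increase x_end /= wE' drop_index_cat_cons //; case: ifP => x1_after /=.
  split=> //.
    have : x.+1 \in asm_word B by rewrite wE' mem_cat in_cons x1_after !orbT.
    by rewrite (assemblee_mem_word asmB) => /andP[].
  by move: x1_after; rewrite mem_cat mem_seq1 in_cons => /orP[] ->; rewrite ?orbT.
split=> // xn; have : x.+1 \in asm_word B by rewrite (assemblee_mem_word asmB).
by rewrite wE' mem_cat in_cons x1_after orbF mem_cat mem_seq1.
Qed.

Definition rank_le (a b : dir * label) : bool := dir_rank a.1 <= dir_rank b.1.

Lemma rank_le_trans : transitive rank_le.
Proof. by move=> b a c; apply: leq_trans. Qed.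

Lemma fe_terminal_sorted p : fe_terminal p -> sorted rank_le p.
Proof.
move=> term; apply: sorted_adjacent => p1 [dE E] [dS S] p2 pE.
rewrite /rank_le leqNgt; apply/negP => rank_lt.
by apply: (term _); rewrite pE; apply: FeStep.
Qed.

Lemma in_labels_split d p x : in_labels d p x ->
  exists p1 l p2, p = p1 ++ (d, l) :: p2 /\ x \in lab_seq l.
Proof.
by case/in_labelsP=> -[d' l] /splitPr[p1 p2] [/= -> xl]; exists p1, l, p2.
Qed.

Section Terminal.

Variables (N bl b1 : nat) (p : fe_state).
Hypotheses (bl_b1 : bl <= b1) (b1_N : b1 <= N).
Hypotheses (p_inv : fe_inv N bl b1 p) (p_term : fe_terminal p).

Lemma terminal_labels_succ d x : in_labels d p x ->
  match d with
  | DirW => x != b1 /\ (x < N -> in_labels DirW p x.+1)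
  | DirSW => bl < x <= b1
  | DirS => x < N /\ (x.+1 = bl \/ in_labels DirS p x.+1)
  end.
Proof.
case/in_labels_split=> p1 [l [p2 [pE xl]]]; have := fe_inv_edges p_inv pE xl.
have srt : sorted rank_le (p1 ++ (d, l) :: p2) by rewrite -pE; apply: fe_terminal_sorted.
case/andP: (sorted_cat_cons_all rank_le_trans srt) => /allP before /allP after.
have in_p e : e \in p1 ++ (d, l) :: p2 -> e.1 = d -> x.+1 \in lab_seq e.2 -> in_labels d p x.+1.
  by move=> ep ed x1e; apply/in_labelsP; exists e; rewrite ?pE.
case: d pE srt before after in_p => //= pE _ before after in_p.
- case=> -> next; split=> // /next; rewrite mem_cat.
  case/orP=> [/state_valsP[[d' l'] e'p1 x1e'] | x1l]; last first.
    by apply: (in_p (DirW, l)); rewrite ?mem_cat ?mem_head ?orbT.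
  apply: (in_p (d', l')) => //; first by rewrite mem_cat e'p1.
  by move: (before _ e'p1); rewrite /rank_le; case: (d').
- case=> _ -> next; split=> //; case/orP: next => [/eqP -> | x1]; [by left | right; move: x1].
  rewrite mem_cat; case/orP=> [x1l | /state_valsP[[d' l'] e'p2 x1e']].
    by apply: (in_p (DirS, l)); rewrite ?mem_cat ?mem_head ?orbT.
  apply: (in_p (d', l')) => //; first by rewrite mem_cat inE e'p2 !orbT.
  by move: (after _ e'p2); rewrite /rank_le; case: (d').
Qed.

Lemma terminal_labels_range d x : in_labels d p x ->
  match d with
  | DirW => b1 < x <= N
  | DirSW => bl < x <= b1
  | DirS => 0 < x < bl
  end.
Proof.
move=> dx; have /andP[/andP[x_pos xN] x_bl] : (0 < x <= N) && (x != bl).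
  rewrite -(fe_inv_mem x p_inv); case/in_labelsP: dx => e ep [_ xe].
  by apply/state_valsP; exists e.
case: d dx => dx.
- rewrite xN andbT ltnNge; apply/negP => xb1.
  apply: (succ_closed_absent (P := in_labels DirW p) (m := b1)) xb1 dx.
    by move=> y yb1 /terminal_labels_succ[_]; apply; apply: leq_trans yb1 b1_N.
  by case/terminal_labels_succ; rewrite eqxx.
- exact: terminal_labels_succ dx.
- rewrite x_pos ltn_neqAle x_bl /= leqNgt; apply/negP => blx.
  apply: (succ_closed_absent (P := fun y => bl < y /\ in_labels DirS p y) (m := N)) xN _.
  + move=> y _ [bly /terminal_labels_succ[_ [y1bl | next]]]; last by split; first exact: leqW.
    by move: bly; rewrite -y1bl ltnNge leqnSn.
  + by case=> _ /terminal_labels_succ[]; rewrite ltnn.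
  + by split.
Qed.

Lemma fe_inv_terminal :
  [/\ forall x, in_labels DirW p x = (b1 < x <= N),
      forall x, in_labels DirS p x = (1 <= x < bl)
    & forall x, in_labels DirSW p x = (bl < x <= b1)].
Proof.
have cover x : 0 < x <= N -> x != bl -> exists d, in_labels d p x.
  move=> x_range x_bl; have : x \in state_vals p by rewrite (fe_inv_mem x p_inv) x_range.
  by case/state_valsP=> e ep xe; exists e.1; apply/in_labelsP; exists e.
split=> x; apply/idP/idP => [/terminal_labels_range // | x_range];
  have [d dx] := cover x ltac:(lia) ltac:(lia);
  by move: (terminal_labels_range dx); case: d dx => // _; lia.
Qed.

End Terminal.

Theorem lemma3p4 (n r : nat) (B : seq (seq nat)) (fin : fe_state) :
  r <= n ->
  assemblee n.+1 r.+1 B ->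
  fe_run (fe_init B) fin ->
  fe_terminal fin ->
  [/\ forall x, in_labels DirW fin x = (b_first B < x <= n.+1),
      forall x, in_labels DirS fin x = (1 <= x < b_last B)
    & forall x, in_labels DirSW fin x = (b_last B < x <= b_first B)].
Proof.
move=> _ asmB run term.
have b1_end := assemblee_b_first asmB.
apply: fe_inv_terminal (fe_inv_run run (fe_inv_init asmB)) term.
  by case/andP: (assemblee_ends_bounds asmB b1_end).
by have := assemblee_ends_word asmB b1_end; rewrite (assemblee_mem_word asmB) => /andP[].
Qed.
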